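(* In the MAD-HTLC game starting from its initial subgame (first of the $T$ rounds, with the deposit contract MH-Dep still redeemable), if Alice ($\mathcal{A}$) knows the preimage $\textit{pre}_a$ and $\mathcal{A}$ and Bob ($\mathcal{B}$) both follow the prescribed strategies, then the miners' best-response strategy leads to $\mathcal{A}$ redeeming MH-Dep for $v^{\text{dep}} - f^{\text{dep}}_{\mathcal{A}}$ tokens, and $\mathcal{B}$ redeeming MH-Col for $v^{\text{col}} - f^{\text{col}}_{\mathcal{B}}$ tokens.
   Context: Setting: a blockchain where in each of $T$ rounds $\mathcal{A}$ and $\mathcal{B}$ may publish transactions to a public mempool, then one miner (chosen with probability equal to her mining power) creates a block containing one transaction of her choice and collects its fee; there is always an unrelated mempool transaction paying the base fee $f$. Miners and users are rational, non-myopic, and maximize expected tokens at game end. MAD-HTLC is initiated in some block and consists of two contracts parameterized by hash digests $\textit{dig}_a = H(\textit{pre}_a)$, $\textit{dig}_b = H(\textit{pre}_b)$ (only $\mathcal{B}$ knows $\textit{pre}_b$) and timeout $T$. MH-Dep holds $v^{\text{dep}}$ tokens and is redeemable (i) by $\mathcal{A}$ with $\textit{pre}_a$ and her signature at any time, (ii) by $\mathcal{B}$ with $\textit{pre}_b$ and his signature after $T$ blocks, or (iii) by anyone presenting both $\textit{pre}_a$ and $\textit{pre}_b$. MH-Col holds $v^{\text{col}}$ tokens and is redeemable only after $T$ blocks, either by $\mathcal{B}$ with his signature or by anyone presenting both preimages. Prescribed strategy: if $\mathcal{A}$ knows $\textit{pre}_a$ she publishes, during the first $T-1$ rounds, a transaction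 redeeming MH-Dep via path (i) with fee $f^{\text{dep}}_{\mathcal{A}}$, where $f < f^{\text{dep}}_{\mathcal{A}} < v^{\text{dep}}$; if $\mathcal{A}$ published it, $\mathcal{B}$ publishes in round $T$ a transaction redeeming only MH-Col via his signature path with fee $f^{\text{col}}_{\mathcal{B}}$, where $f < f^{\text{col}}_{\mathcal{B}} < v^{\text{col}}$ (otherwise $\mathcal{B}$ redeems both contracts). The game is analyzed via subgame perfect equilibrium and backward induction. *)

(* Model of the MAD-HTLC game (rounds 1..T) in which A and B
   follow the prescribed strategies, so that the only strategic players are
   the miners. *)
From mathcomp Require Import all_boot all_order all_algebra.
Set Implicit Arguments. Unset Strict Implicit. Unset Printing Implicit Defensive.
Import Order.TTheory GRing.Theory Num.Theory.
Local Open Scope ring_scope.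

(* What the miner of a round puts in her block:
   Unrel = the unrelated mempool transaction paying the base fee f,
   IncA  = A's transaction redeeming MH-Dep via path (i) (fee fA),
   IncB  = B's transaction redeeming only MH-Col via his signature (fee fB). *)
Inductive choice := Unrel | IncA | IncB.

(* Payoff-relevant state: has MH-Dep been redeemed (by A's tx), has MH-Col
   been redeemed (by B's tx). *)
Record gstate := GState { depR : bool; colR : bool }.
Definition init_state := GState false false.

Definition next_state (s : gstate) (c : choice) : gstate :=
  match c with
  | Unrel => s
  | IncA => GState true (colR s)
  | IncB => GState (depR s) true
  end.

Section Game.
Variables (R : realFieldType) (M : finType) (lam : M -> R).
(* T = timeout / number of rounds; tA = round (in 1..T-1) in which A
   publishes her MH-Dep transaction. *)
Variables (T tA : nat) (f fA fB : R).

(* A's tx is in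
   the mempool from round tA on; B publishes his tx in round T (MH-Col is
   redeemable by B's signature from then on). Pre_b is never revealed under
   the prescribed strategies, so no path-(iii) transaction exists. *)
Definition validc (k : nat) (s : gstate) (c : choice) : bool :=
  match c with
  | Unrel => true
  | IncA => (tA <= k)%N && ~~ depR s
  | IncB => (k == T)%N && ~~ colR s
  end.

Definition eff k s c := if validc k s c then c else Unrel.

Definition fee (c : choice) : R :=
  match c with Unrel => f | IncA => fA | IncB => fB end.

Definition strategy := nat -> gstate -> choice.
Definition profile := M -> strategy.

(* Expected fees collected by miner i over the next n rounds, starting at
   round k in state s, when miners play sig (the round's miner is j with
   probability lam j). *)
Fixpoint value (sig : profile) (i : M) (n k : nat) (s : gstate) : R :=
  match n with
  | 0 => 0
  | n'.+1 =>
      \sum_(j : M) lam j *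
        ((if j == i then fee (eff k s (sig j k s)) else 0)
         + value sig i n' k.+1 (next_state s (eff k s (sig j k s))))
  end.

Definition subgame_value sig i k s := value sig i (T.+1 - k) k s.

Definition deviate (sig : profile) (i : M) (tau : strategy) : profile :=
  fun j => if j == i then tau else sig j.

Definition is_SPE (sig : profile) : Prop :=
  forall (i : M) (tau : strategy) (k : nat) (s : gstate),
    (1 <= k <= T)%N ->
    subgame_value (deviate sig i tau) i k s <= subgame_value sig i k s.

Fixpoint play (sig : profile) (w : nat -> M) (n k : nat) (s : gstate) : gstate :=
  match n with
  | 0 => s
  | n'.+1 => play sig w n' k.+1 (next_state s (eff k s (sig (w k) k s)))
  end.

Definition final_state sig w := play sig w T 1 init_state.
End Game.

(* Tokens obtained by A and B at the end of the game (under the prescribed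
   strategies, their only transactions are the ones above). *)
Definition tokensA (R : realFieldType) (vdep fA : R) (s : gstate) : R :=
  if depR s then vdep - fA else 0.
Definition tokensB (R : realFieldType) (vcol fB : R) (s : gstate) : R :=
  if colR s then vcol - fB else 0.

From mathcomp Require Import all_boot all_order all_algebra.
From mathcomp Require Import zify lra.
Set Implicit Arguments. Unset Strict Implicit. Unset Printing Implicit Defensive.
Import Order.TTheory GRing.Theory Num.Theory.
Local Open Scope ring_scope.

(* By the one-shot deviation principle, a profile is a subgame perfect
   equilibrium iff no miner ever gains by changing only the transaction she
   includes in a single block.  The greedy profile (include the valid
   transaction with the highest fee) passes this test: postponing the
   redemption of MH-Dep costs a miner at most her share [lam i * (fA - f)] of
   the later blocks, less than the [fA - f] she forgoes now.  Conversely, in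
   any equilibrium the miner of round T includes B's transaction once MH-Dep
   is redeemed, since [fB > f]; so in round T-1 including A's transaction is
   worth [fA + lam i * fB], which beats the [f + lam i * max fA fB] of any
   other choice.  As MH-Col cannot be redeemed before round T, every play
   ends with both contracts redeemed. *)

Section MinerGame.
Variables (R : realFieldType) (M : finType) (lam : M -> R).
Variables (T tA : nat) (f fA fB : R).

Local Notation V := (subgame_value lam T tA f fA fB).

Definition block_payoff (sig : profile M) (i : M) (k : nat) (s : gstate)
    (c : choice) : R :=
  fee f fA fB (eff T tA k s c) + V sig i k.+1 (next_state s (eff T tA k s c)).

Definition one_shot_optimal (sig : profile M) : Prop :=
  forall i k s c, (1 <= k <= T)%N ->
    block_payoff sig i k s c <= block_payoff sig i k s (sig i k s).

Lemma subgame_valueE sig i k s : (k <= T)%N ->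
  V sig i k s = lam i * block_payoff sig i k s (sig i k s)
    + \sum_(j | j != i) lam j * V sig i k.+1 (next_state s (eff T tA k s (sig j k s))).
Proof.
move=> kT; rewrite /subgame_value /block_payoff /subgame_value subSS.
rewrite (_ : T.+1 - k = (T - k).+1)%N /=; last lia.
rewrite (bigD1 i) //= eqxx; congr (_ + _).
by apply: eq_bigr => j /negbTE ->; rewrite add0r.
Qed.

Lemma subgame_value_after_last sig i s : V sig i T.+1 s = 0.
Proof. by rewrite /subgame_value subnn. Qed.

Lemma subgame_value_last sig i s :
  V sig i T s = lam i * fee f fA fB (eff T tA T s (sig i T s)).
Proof.
rewrite subgame_valueE // /block_payoff subgame_value_after_last addr0 big1 ?addr0 //.
by move=> j _; rewrite subgame_value_after_last mulr0.
Qed.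

Lemma value_eq_from sig sig' i n k s :
  (forall j k' s', (k <= k')%N -> sig j k' s' = sig' j k' s') ->
  value lam T tA f fA fB sig i n k s = value lam T tA f fA fB sig' i n k s.
Proof.
elim: n k s => [//|n IH] k s eq_sig /=; apply: eq_bigr => j _.
by rewrite eq_sig // (IH _ _ (fun j k' s' lt_k => eq_sig j k' s' (ltnW lt_k))).
Qed.

Lemma play_add (sig : profile M) (w : nat -> M) m n k s :
  play T tA sig w (m + n) k s = play T tA sig w n (k + m) (play T tA sig w m k s).
Proof. by elim: m k s => [|m IH] k s; rewrite ?addn0 //= IH addSnnS. Qed.

Lemma colR_play (sig : profile M) (w : nat -> M) n k s :
  (k + n <= T)%N -> colR (play T tA sig w n k s) = colR s.
Proof.
elim: n k s => [//|n IH] k s kn /=; rewrite IH; last lia.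
have /negbTE k_neq_T : k != T by lia.
by case: (sig _ _ _); rewrite /eff /validc /= ?k_neq_T ?andbF //; case: ifP.
Qed.

Hypothesis lam_gt0 : forall i, 0 < lam i.

Lemma is_SPE_one_shot_optimal sig :
  is_SPE lam T tA f fA fB sig -> one_shot_optimal sig.
Proof.
move=> spe i k s c k_in; have kT : (k <= T)%N by case/andP: k_in.
pose tau : strategy := fun k' s' => if k' == k then c else sig i k' s'.
have dev_i : deviate sig i tau i k s = c by rewrite /deviate /tau !eqxx.
have dev_j j : j != i -> deviate sig i tau j = sig j.
  by rewrite /deviate => /negbTE ->.
have dev_later s' : V (deviate sig i tau) i k.+1 s' = V sig i k.+1 s'.
  apply: value_eq_from => j k' s'' lt_kk'; rewrite /deviate.
  by case: eqP => [->|//]; rewrite /tau gtn_eqF.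
have := spe i tau k s k_in; rewrite !subgame_valueE //.
rewrite {1}/block_payoff dev_i dev_later -/(block_payoff sig i k s c).
rewrite (eq_bigr (fun j => lam j * V sig i k.+1 (next_state s (eff T tA k s (sig j k s))))).
  by rewrite lerD2r ler_pM2l.
by move=> j /dev_j ->; rewrite dev_later.
Qed.

Lemma one_shot_optimal_is_SPE sig :
  one_shot_optimal sig -> is_SPE lam T tA f fA fB sig.
Proof.
move=> opt i tau.
suff dev_le n k s : (0 < k)%N -> (n + k = T.+1)%N ->
    V (deviate sig i tau) i k s <= V sig i k s.
  by move=> k s /andP[k_gt0 kT]; apply: (dev_le (T.+1 - k)%N); lia.
elim: n k s => [|n IH] k s k_gt0 nk.
  by rewrite add0n in nk; rewrite nk !subgame_value_after_last.
have kT : (k <= T)%N by lia.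
have IH' s' : V (deviate sig i tau) i k.+1 s' <= V sig i k.+1 s' by apply: IH; lia.
have dev_i : deviate sig i tau i = tau by rewrite /deviate eqxx.
rewrite !subgame_valueE // dev_i; apply: lerD.
  rewrite ler_pM2l //; apply: le_trans (opt i k s (tau k s) _); last lia.
  by rewrite /block_payoff lerD2l.
by apply: ler_sum => j ji; rewrite /deviate (negbTE ji) ler_pM2l.
Qed.

Hypothesis lam_sum1 : \sum_i lam i = 1.

Lemma lam_add_others i : lam i + \sum_(j | j != i) lam j = 1.
Proof. by rewrite -lam_sum1 [RHS](bigD1 i). Qed.

Lemma lam_le1 i : lam i <= 1.
Proof.
rewrite -(lam_add_others i) lerDl.
by apply: sumr_ge0 => j _; apply: ltW.
Qed.

Lemma subgame_value_uniform (st : strategy) i k s : (k <= T)%N ->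
  V (fun=> st) i k s = lam i * fee f fA fB (eff T tA k s (st k s))
    + V (fun=> st) i k.+1 (next_state s (eff T tA k s (st k s))).
Proof.
move=> kT; rewrite subgame_valueE // /block_payoff -big_distrl /= mulrDr.
by rewrite -addrA -mulrDl lam_add_others mul1r.
Qed.

Hypotheses (f_lt_fA : f < fA) (f_lt_fB : f < fB).

Section Greedy.
Hypothesis tA_le_T : (tA <= T)%N.

Definition greedy : strategy := fun k s =>
  if (k == T) && ~~ colR s && (depR s || (fA < fB)) then IncB else IncA.

Local Notation greedy_profile := (fun _ : M => greedy).

Lemma greedy_last_round s c :
  fee f fA fB (eff T tA T s c) <= fee f fA fB (eff T tA T s (greedy T s)).
Proof.
have := f_lt_fA; have := f_lt_fB.
case: s => [[] []]; case: c; rewrite /greedy /eff /validc /= eqxx tA_le_T //=;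
  case: (ltrP fA fB) => /=; lra.
Qed.

Lemma greedy_deposit_delay i k c : (tA <= k <= T)%N ->
  V greedy_profile i k (GState false c)
    <= V greedy_profile i k (GState true c) + lam i * (fA - f).
Proof.
case/andP=> tA_k kT; rewrite !(@subgame_value_uniform greedy i k) //.
have := f_lt_fA; have := f_lt_fB.
case: (eqVneq k T) => [->|k_neq_T]; last first.
  by rewrite /greedy /eff /validc /= (negbTE k_neq_T) tA_k /=; lra.
rewrite !subgame_value_after_last !addr0 -mulrDr ler_pM2l //.
by case: c; rewrite /greedy /eff /validc /= eqxx tA_le_T //=;
  case: (ltrP fA fB) => /=; lra.
Qed.

Lemma greedy_one_shot_optimal : one_shot_optimal greedy_profile.
Proof.
move=> i k s c /andP[_ kT]; rewrite /block_payoff.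
case: (eqVneq k T) => [->|k_neq_T].
  by rewrite !subgame_value_after_last !addr0 greedy_last_round.
rewrite {2 4}/greedy (negbTE k_neq_T) /=.
have [-> //|->] : c = IncA \/ eff T tA k s c = Unrel.
  by case: c; rewrite /eff /validc /= ?(negbTE k_neq_T); auto.
case: (boolP (tA <= k)%N) => [tA_k|not_tA_k]; last first.
  by rewrite /eff /validc /= (negbTE not_tA_k).
case: s => [[] cc]; rewrite /eff /validc /= tA_k //=.
have /(@greedy_deposit_delay i _ cc) delay : (tA <= k.+1 <= T)%N by lia.
have share : lam i * (fA - f) <= fA - f.
  by rewrite ler_piMl ?lam_le1 // subr_ge0 ltW.
have := f_lt_fA; lra.
Qed.

Lemma greedy_is_SPE : is_SPE lam T tA f fA fB greedy_profile.
Proof. exact/one_shot_optimal_is_SPE/greedy_one_shot_optimal. Qed.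

End Greedy.

Section OptimalPlay.
Hypotheses (tA_gt0 : (0 < tA)%N) (tA_lt_T : (tA < T)%N).
Variable sig : profile M.
Hypothesis sig_opt : one_shot_optimal sig.

Lemma optimal_includes_col j : sig j T (GState true false) = IncB.
Proof.
have /(@sig_opt j T (GState true false) IncB) : (1 <= T <= T)%N by lia.
rewrite /block_payoff !subgame_value_after_last !addr0.
by case: (sig j T _); rewrite /eff /validc /= eqxx ?andbF //=
  => /(lt_le_trans f_lt_fB); rewrite ltxx.
Qed.

Lemma optimal_includes_dep j : sig j T.-1 (GState false false) = IncA.
Proof.
have /(@sig_opt j T.-1 (GState false false) IncA) : (1 <= T.-1 <= T)%N by lia.
have /negbTE T1_neq_T : T.-1 != T by lia.
have tA_T1 : (tA <= T.-1)%N by lia.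
rewrite /block_payoff prednK ?(leq_ltn_trans (leq0n _) tA_lt_T) //.
rewrite !subgame_value_last.
have -> : eff T tA T.-1 (GState false false) IncA = IncA.
  by rewrite /eff /validc /= tA_T1.
rewrite /= optimal_includes_col /eff /validc /= eqxx /=.
have := lam_gt0 j; have := lam_le1 j; have := f_lt_fA; have := f_lt_fB.
case: (sig j T.-1 _); rewrite /= ?T1_neq_T ?andbF //=;
  case: (sig j T _); rewrite /= ?eqxx ?(ltnW tA_lt_T) //= => *; exfalso; nra.
Qed.

Lemma optimal_final_state w : final_state T tA sig w = GState true true.
Proof.
have T2 : (2 <= T)%N by lia.
have -> : final_state T tA sig w = play T tA sig w (T - 2 + 2) 1 init_state.
  by rewrite subnK.
rewrite play_add (_ : 1 + (T - 2) = T.-1)%N; last lia.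
have : colR (play T tA sig w (T - 2) 1 init_state) = false.
  by rewrite colR_play //; lia.
case: (play _ _ _ _ _ _ _) => d _ /= ->.
have /negbTE T1_neq_T : T.-1 != T by lia.
have -> : next_state (GState d false)
    (eff T tA T.-1 (GState d false) (sig (w T.-1) T.-1 (GState d false)))
    = GState true false.
  case: d; last by rewrite optimal_includes_dep /eff /validc /= ifT //; lia.
  by case: (sig _ _ _); rewrite /eff /validc /= ?T1_neq_T ?andbF.
by rewrite prednK ?optimal_includes_col /eff /validc /= ?eqxx //; lia.
Qed.

End OptimalPlay.

End MinerGame.

Theorem lemma2 (R : realFieldType) (M : finType) (lam : M -> R)
    (T tA : nat) (f fA fB vdep vcol : R) :
  (forall i : M, 0 < lam i) ->
  \sum_(i : M) lam i = 1 ->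
  (0 < tA < T)%N ->
  f < fA < vdep ->
  f < fB < vcol ->
  (exists sig : profile M, is_SPE lam T tA f fA fB sig) /\
  (forall sig : profile M, is_SPE lam T tA f fA fB sig ->
     forall w : nat -> M,
       tokensA vdep fA (final_state T tA sig w) = vdep - fA /\
       tokensB vcol fB (final_state T tA sig w) = vcol - fB).
Proof.
(* [fA < vdep] and [fB < vcol] only make the prescribed strategies worthwhile
   for A and B; the miners' game does not depend on them. *)
move=> lam_gt0 lam_sum1 /andP[tA_gt0 tA_lt_T] /andP[f_lt_fA _] /andP[f_lt_fB _].
split.
  by exists (fun=> greedy T fA fB); apply: greedy_is_SPE => //; apply: ltnW.
move=> sig /(is_SPE_one_shot_optimal lam_gt0) sig_opt w.
by rewrite (optimal_final_state lam_gt0 lam_sum1 f_lt_fA f_lt_fB tA_gt0 tA_lt_T sig_opt).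
Qed.
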